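(* Consider a network flow market on a directed series-parallel network with source $s$ and sink $t$, where each edge $e$ (a good) has capacity $c_e>0$ and delay cost $d_e\ge0$ per unit of flow. Each agent $i\in A$ must send $r_i\ge0$ units of flow from $s$ to $t$ (its covering constraints are flow conservation at all nodes other than $s,t$, net outflow $r_i$ at $s$, and nonnegativity), and the allocation must satisfy $\sum_if_{ie}\le c_e$ for every edge. Assume the maximum $s$–$t$ flow value is at least $\sum_{i\in A}r_i$. Then this market satisfies extensibility.
   Context: An allocation $(f_{ie})$ is supply respecting if $\sum_if_{ie}\le c_e$ for every edge $e$. The delay of agent $i$ is $\sum_ed_ef_{ie}$. For a set of agents $S$, an allocation is jointly optimal for $S$ if every $i\in S$ sends an $s$–$t$ flow of value $r_i$, it is supply respecting, and it minimizes $\sum_{i\in S}\sum_ed_ef_{ie}$ among such allocations. A market satisfies extensibility if for every $S\subset A$, every allocation jointly optimal for $S$ and every $i\in A\setminus S$, there is an allocation jointly optimal for $S\cup\{i\}$ in which each agent of $S$ has the same delay as before. A series-parallel network (between $s$ and $t$) is one obtained from single edges by repeated series and parallel composition. *)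

From HB Require Import structures.
From mathcomp Require Import all_boot all_order all_algebra.
Set Implicit Arguments. Unset Strict Implicit. Unset Printing Implicit Defensive.
Import Order.TTheory GRing.Theory Num.Theory.
Local Open Scope ring_scope.

Inductive sp : Type :=
| SPEdge : sp
| SPSer : sp -> sp -> sp    (* t of first glued to s of second *)
| SPPar : sp -> sp -> sp.   (* sources glued, sinks glued *)

Fixpoint sp_edge (N : sp) : finType :=
  match N with
  | SPEdge => unit
  | SPSer a b => (sp_edge a + sp_edge b)%type
  | SPPar a b => (sp_edge a + sp_edge b)%type
  end.

Fixpoint sp_inner (N : sp) : finType :=
  match N with
  | SPEdge => void
  | SPSer a b => (sp_inner a + sp_inner b + unit)%type  (* unit = glue node *)
  | SPPar a b => (sp_inner a + sp_inner b)%type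
  end.

(* Nodes: inl false = source s, inl true = sink t, inr x = internal node x. *)
Definition sp_node (N : sp) : finType := (bool + sp_inner N)%type.
Definition sp_s (N : sp) : sp_node N := inl false.
Definition sp_t (N : sp) : sp_node N := inl true.

Definition ser_l (a b : sp) (x : sp_node a) : sp_node (SPSer a b) :=
  match x with
  | inl false => inl false
  | inl true => inr (inr tt)
  | inr y => inr (inl (inl y))
  end.
Definition ser_r (a b : sp) (x : sp_node b) : sp_node (SPSer a b) :=
  match x with
  | inl false => inr (inr tt)
  | inl true => inl true
  | inr y => inr (inl (inr y))
  end.
Definition par_l (a b : sp) (x : sp_node a) : sp_node (SPPar a b) :=
  match x with
  | inl z => inl z
  | inr y => inr (inl y)
  end.
Definition par_r (a b : sp) (x : sp_node b) : sp_node (SPPar a b) :=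
  match x with
  | inl z => inl z
  | inr y => inr (inr y)
  end.

Fixpoint sp_ends_rec (N : sp) : sp_edge N -> sp_node N * sp_node N :=
  match N return sp_edge N -> sp_node N * sp_node N with
  | SPEdge => fun _ => (inl false, inl true)
  | SPSer a b => fun e =>
      match e with
      | inl ea => (@ser_l a b (sp_ends_rec ea).1, @ser_l a b (sp_ends_rec ea).2)
      | inr eb => (@ser_r a b (sp_ends_rec eb).1, @ser_r a b (sp_ends_rec eb).2)
      end
  | SPPar a b => fun e =>
      match e with
      | inl ea => (@par_l a b (sp_ends_rec ea).1, @par_l a b (sp_ends_rec ea).2)
      | inr eb => (@par_r a b (sp_ends_rec eb).1, @par_r a b (sp_ends_rec eb).2)
      end
  end.

Definition sp_ends (N : sp) (e : sp_edge N) := sp_ends_rec e.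

Definition sp_tail (N : sp) (e : sp_edge N) : sp_node N := (sp_ends e).1.
Definition sp_head (N : sp) (e : sp_edge N) : sp_node N := (sp_ends e).2.

Section Market.
Variables (R : realFieldType) (N : sp) (A : finType).

Definition net_out (g : sp_edge N -> R) (v : sp_node N) : R :=
  \sum_(e | sp_tail e == v) g e - \sum_(e | sp_head e == v) g e.

Definition is_st_flow (g : sp_edge N -> R) (val : R) : Prop :=
  (forall e, 0 <= g e) /\
  (forall v : sp_node N, v != sp_s N -> v != sp_t N -> net_out g v = 0) /\
  net_out g (sp_s N) = val.

Definition delay (d : sp_edge N -> R) (g : sp_edge N -> R) : R :=
  \sum_e d e * g e.

Definition supply_respecting (c : sp_edge N -> R) (S : {set A})
  (f : A -> sp_edge N -> R) : Prop :=
  forall e, \sum_(i in S) f i e <= c e.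

Definition feasible_for (c : sp_edge N -> R) (r : A -> R) (S : {set A})
  (f : A -> sp_edge N -> R) : Prop :=
  (forall i, i \in S -> is_st_flow (f i) (r i)) /\ supply_respecting c S f.

Definition jointly_optimal (c d : sp_edge N -> R) (r : A -> R) (S : {set A})
  (f : A -> sp_edge N -> R) : Prop :=
  feasible_for c r S f /\
  forall g, feasible_for c r S g ->
    \sum_(i in S) delay d (f i) <= \sum_(i in S) delay d (g i).

Definition extensibility (c d : sp_edge N -> R) (r : A -> R) : Prop :=
  forall (S : {set A}) (f : A -> sp_edge N -> R) (i : A),
    jointly_optimal c d r S f -> i \notin S ->
    exists g : A -> sp_edge N -> R,
      jointly_optimal c d r (i |: S) g /\
      forall j, j \in S -> delay d (g j) = delay d (f j).

End Market.

From HB Require Import structures.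
From mathcomp Require Import all_boot all_order all_algebra.
From mathcomp Require Import ring lra.
From Stdlib Require Import FunctionalExtensionality.
Import Order.TTheory GRing.Theory Num.Theory.
Set Implicit Arguments. Unset Strict Implicit. Unset Printing Implicit Defensive.
Local Open Scope ring_scope.

(* The aggregate flow of a jointly optimal allocation is a minimum-cost flow of
   value sum_(j in S) r_j: any competing flow can be split among the agents in
   proportion to their demands. In a series-parallel network, minimum-cost flows
   are characterised locally: at every parallel composition, no augmenting path
   through one branch is cheaper than the costliest flow-carrying path through
   the other. This condition survives augmentation along a cheapest augmenting
   path, which never uses reverse edges. Hence a minimum-cost flow of value
   sum_(j in S) r_j + r_i is reached from the aggregate flow by augmentations
   only, so it dominates it edgewise; the newcomer i receives the difference and
   every other agent keeps its flow, hence its delay. *)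

(** * Flows on series-parallel networks *)

Section SeriesParallelFlows.
Variable R : realFieldType.
Implicit Types (a b N : sp).

Lemma sum_pred_comp (E I V : finType) (phi : I -> V) (tau : E -> I) (g : E -> R) x :
  \sum_(e | phi (tau e) == x) g e = \sum_(y | phi y == x) \sum_(e | tau e == y) g e.
Proof.
rewrite (partition_big tau (fun y => phi y == x)) //.
apply: eq_bigr => y /eqP phiy; apply: eq_bigl => e.
by case: (tau e =P y) => [->|]; rewrite ?andbF ?andbT ?phiy ?eqxx.
Qed.

Lemma sum_pred_inj (I V : finType) (phi : I -> V) (h : I -> R) y0 x :
  injective phi -> phi y0 = x -> \sum_(y | phi y == x) h y = h y0.
Proof. by move=> inj_phi <-; rewrite (big_pred1 y0) // => y; rewrite inj_eq. Qed.

Lemma sum_pred_none (I V : finType) (phi : I -> V) (h : I -> R) x :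
  (forall y, phi y != x) -> \sum_(y | phi y == x) h y = 0.
Proof. by move=> phi_x; rewrite big_pred0 // => y; apply/negbTE. Qed.

Lemma ser_l_inj a b : injective (@ser_l a b). Proof. by move=> [[]|?] [[]|?] //= [->]. Qed.
Lemma ser_r_inj a b : injective (@ser_r a b). Proof. by move=> [[]|?] [[]|?] //= [->]. Qed.
Lemma par_l_inj a b : injective (@par_l a b). Proof. by move=> [[]|?] [[]|?] //= [->]. Qed.
Lemma par_r_inj a b : injective (@par_r a b). Proof. by move=> [[]|?] [[]|?] //= [->]. Qed.

Definition lpart a b (g : sp_edge a + sp_edge b -> R) : sp_edge a -> R := fun e => g (inl e).
Definition rpart a b (g : sp_edge a + sp_edge b -> R) : sp_edge b -> R := fun e => g (inr e).
Definition glue a b (ga : sp_edge a -> R) (gb : sp_edge b -> R) : sp_edge a + sp_edge b -> R :=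
  fun e => match e with inl e => ga e | inr e => gb e end.

Lemma net_out_ser a b (g : sp_edge (SPSer a b) -> R) x :
  net_out g x = \sum_(y | @ser_l a b y == x) net_out (lpart g) y
              + \sum_(y | @ser_r a b y == x) net_out (rpart g) y.
Proof.
rewrite {1}/net_out [in LHS]big_sumType [in LHS]big_sumType.
rewrite /net_out /sp_tail /sp_head /sp_ends /=.
rewrite !(sum_pred_comp (@ser_l a b) (fun e => (sp_ends_rec e).1))
        !(sum_pred_comp (@ser_l a b) (fun e => (sp_ends_rec e).2))
        !(sum_pred_comp (@ser_r a b) (fun e => (sp_ends_rec e).1))
        !(sum_pred_comp (@ser_r a b) (fun e => (sp_ends_rec e).2)).
by rewrite !sumrB /lpart /rpart; lra.
Qed.

Lemma net_out_par a b (g : sp_edge (SPPar a b) -> R) x :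
  net_out g x = \sum_(y | @par_l a b y == x) net_out (lpart g) y
              + \sum_(y | @par_r a b y == x) net_out (rpart g) y.
Proof.
rewrite {1}/net_out [in LHS]big_sumType [in LHS]big_sumType.
rewrite /net_out /sp_tail /sp_head /sp_ends /=.
rewrite !(sum_pred_comp (@par_l a b) (fun e => (sp_ends_rec e).1))
        !(sum_pred_comp (@par_l a b) (fun e => (sp_ends_rec e).2))
        !(sum_pred_comp (@par_r a b) (fun e => (sp_ends_rec e).1))
        !(sum_pred_comp (@par_r a b) (fun e => (sp_ends_rec e).2)).
by rewrite !sumrB /lpart /rpart; lra.
Qed.

Section SeriesNodes.
Variables (a b : sp) (g : sp_edge (SPSer a b) -> R).

Lemma net_out_ser_s : net_out g (inl false) = net_out (lpart g) (inl false).
Proof.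
rewrite net_out_ser (sum_pred_inj (y0 := inl false) _ (@ser_l_inj a b)) //.
by rewrite sum_pred_none ?addr0 // => -[[]|?].
Qed.

Lemma net_out_ser_l y : net_out g (inr (inl (inl y))) = net_out (lpart g) (inr y).
Proof.
rewrite net_out_ser (sum_pred_inj (y0 := inr y) _ (@ser_l_inj a b)) //.
by rewrite sum_pred_none ?addr0 // => -[[]|?].
Qed.

Lemma net_out_ser_r y : net_out g (inr (inl (inr y))) = net_out (rpart g) (inr y).
Proof.
rewrite net_out_ser (sum_pred_inj (y0 := inr y) _ (@ser_r_inj a b)) //.
by rewrite sum_pred_none ?add0r // => -[[]|?].
Qed.

Lemma net_out_ser_glue :
  net_out g (inr (inr tt)) = net_out (lpart g) (inl true) + net_out (rpart g) (inl false).
Proof.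
rewrite net_out_ser (sum_pred_inj (y0 := inl true) _ (@ser_l_inj a b)) //.
by rewrite (sum_pred_inj (y0 := inl false) _ (@ser_r_inj a b)).
Qed.

End SeriesNodes.

Section ParallelNodes.
Variables (a b : sp) (g : sp_edge (SPPar a b) -> R).

Lemma net_out_par_st z :
  net_out g (inl z) = net_out (lpart g) (inl z) + net_out (rpart g) (inl z).
Proof.
rewrite net_out_par (sum_pred_inj (y0 := inl z) _ (@par_l_inj a b)) //.
by rewrite (sum_pred_inj (y0 := inl z) _ (@par_r_inj a b)).
Qed.

Lemma net_out_par_l y : net_out g (inr (inl y)) = net_out (lpart g) (inr y).
Proof.
rewrite net_out_par (sum_pred_inj (y0 := inr y) _ (@par_l_inj a b)) //.
by rewrite sum_pred_none ?addr0 // => -[[]|?].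
Qed.

Lemma net_out_par_r y : net_out g (inr (inr y)) = net_out (rpart g) (inr y).
Proof.
rewrite net_out_par (sum_pred_inj (y0 := inr y) _ (@par_r_inj a b)) //.
by rewrite sum_pred_none ?add0r // => -[[]|?].
Qed.

End ParallelNodes.

Lemma sum_net_out N (g : sp_edge N -> R) : \sum_x net_out g x = 0.
Proof.
have sum_fibers (f : sp_edge N -> sp_node N) : \sum_x \sum_(e | f e == x) g e = \sum_e g e.
  by rewrite [RHS](partition_big f predT).
by rewrite /net_out sumrB !sum_fibers subrr.
Qed.

Lemma net_out_sink N (g : sp_edge N -> R) v : is_st_flow g v -> net_out g (sp_t N) = - v.
Proof.
move=> [_ [conserved out_s]]; have := sum_net_out g.
rewrite big_sumType big_bool /= big1 ?addr0; last by move=> y _; apply: conserved.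
by move: out_s; rewrite /sp_s /sp_t => -> /eqP; rewrite addr_eq0 => /eqP.
Qed.

Lemma st_flow_edge (g : sp_edge SPEdge -> R) v : is_st_flow g v <-> 0 <= g tt /\ g tt = v.
Proof.
have out_s : net_out g (inl false) = g tt.
  by rewrite /net_out (big_pred1 tt) ?big_pred0 ?subr0 // => -[].
split=> [[g_ge0 [_ <-]] | [g_ge0 <-]]; first by rewrite out_s.
split; first by case.
by split=> [[[]|[]] //|]; rewrite out_s.
Qed.

Lemma st_flow_ser a b (g : sp_edge (SPSer a b) -> R) v :
  is_st_flow g v <-> is_st_flow (lpart g) v /\ is_st_flow (rpart g) v.
Proof.
split=> [[g_ge0 [conserved out_s]] | [[ga_ge0 [ca out_a]] [gb_ge0 [cb out_b]]]].
  have flow_a : is_st_flow (lpart g) v.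
    split=> [e|]; first exact: g_ge0.
    split=> [[[]|y] // _ _|]; first by rewrite -net_out_ser_l conserved.
    by rewrite -net_out_ser_s.
  split=> //; split=> [e|]; first exact: g_ge0.
  split=> [[[]|y] // _ _|]; first by rewrite -net_out_ser_r conserved.
  have := conserved (inr (inr tt)) isT isT.
  by rewrite net_out_ser_glue (net_out_sink flow_a) => /eqP; rewrite addrC subr_eq0 => /eqP.
split=> [[e|e]|]; [exact: ga_ge0 | exact: gb_ge0 |].
split=> [[[]|[[y|y]|[]]] // _ _|]; last by rewrite net_out_ser_s.
- by rewrite net_out_ser_l ca.
- by rewrite net_out_ser_r cb.
- by rewrite net_out_ser_glue (net_out_sink (conj ga_ge0 (conj ca out_a))) out_b addNr.
Qed.

Lemma st_flow_par a b (g : sp_edge (SPPar a b) -> R) v :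
  is_st_flow g v <->
  exists v1 v2, [/\ is_st_flow (lpart g) v1, is_st_flow (rpart g) v2 & v = v1 + v2].
Proof.
split=> [[g_ge0 [conserved <-]] | [v1 [v2 [[ga_ge0 [ca out_a]] [gb_ge0 [cb out_b]] ->]]]].
  exists (net_out (lpart g) (inl false)), (net_out (rpart g) (inl false)).
  split; last exact: net_out_par_st.
  - split=> [e|]; first exact: g_ge0.
    by split=> // -[[]|y] // _ _; rewrite -net_out_par_l conserved.
  - split=> [e|]; first exact: g_ge0.
    by split=> // -[[]|y] // _ _; rewrite -net_out_par_r conserved.
split=> [[e|e]|]; [exact: ga_ge0 | exact: gb_ge0 |].
split=> [[[]|[y|y]] // _ _|]; last by rewrite net_out_par_st out_a out_b.
- by rewrite net_out_par_l ca.
- by rewrite net_out_par_r cb.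
Qed.

Lemma net_out_comb N (g h : sp_edge N -> R) t x :
  net_out (fun e => g e + t * h e) x = net_out g x + t * net_out h x.
Proof. by rewrite /net_out !big_split /= -!mulr_sumr; ring. Qed.

Lemma net_out_sum N (A : finType) (S : {set A}) (f : A -> sp_edge N -> R) x :
  net_out (fun e => \sum_(j in S) f j e) x = \sum_(j in S) net_out (f j) x.
Proof.
rewrite /net_out sumrB; congr (_ - _).
  rewrite [RHS](exchange_big_dep (fun e => sp_tail e == x)) //=.
  by apply: eq_bigr => e /eqP ->; apply: eq_bigl => j; rewrite eqxx andbT.
rewrite [RHS](exchange_big_dep (fun e => sp_head e == x)) //=.
by apply: eq_bigr => e /eqP ->; apply: eq_bigl => j; rewrite eqxx andbT.
Qed.

Lemma st_flow0 N : is_st_flow (fun _ : sp_edge N => 0 : R) 0.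
Proof.
have out0 x : net_out (fun _ : sp_edge N => 0 : R) x = 0 by rewrite /net_out !big1 ?subr0.
by split=> //; split.
Qed.

Lemma st_flow_comb N (g h : sp_edge N -> R) v w t :
  is_st_flow g v -> is_st_flow h w -> (forall e, 0 <= g e + t * h e) ->
  is_st_flow (fun e => g e + t * h e) (v + t * w).
Proof.
move=> [_ [cg out_g]] [_ [ch out_h]] comb_ge0; split=> //; split.
  by move=> x xs xt; rewrite net_out_comb cg // ch // mulr0 addr0.
by rewrite net_out_comb out_g out_h.
Qed.

Lemma eq_st_flow N (g h : sp_edge N -> R) v : g =1 h -> is_st_flow g v -> is_st_flow h v.
Proof.
move=> gh [g_ge0 [conserved out_s]].
have out_eq x : net_out g x = net_out h x.
  by rewrite /net_out; congr (_ - _); apply: eq_bigr => e _; rewrite gh.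
split=> [e|]; first by rewrite -gh.
split=> [x xs xt|]; last by rewrite -out_eq.
by rewrite -out_eq conserved.
Qed.

Lemma st_flow_scale N (g : sp_edge N -> R) v t :
  is_st_flow g v -> 0 <= t -> is_st_flow (fun e => t * g e) (t * v).
Proof.
move=> g_flow t_ge0.
have scaled_ge0 e : 0 <= 0 + t * g e by rewrite add0r mulr_ge0 //; case: g_flow => + _; apply.
have := st_flow_comb (st_flow0 N) g_flow scaled_ge0; rewrite add0r.
by apply: eq_st_flow => e; rewrite add0r.
Qed.

Lemma st_flow_sub N (g h : sp_edge N -> R) v w :
  is_st_flow g v -> is_st_flow h w -> (forall e, h e <= g e) ->
  is_st_flow (fun e => g e - h e) (v - w).
Proof.
move=> g_flow h_flow hg.
have diff_ge0 e : 0 <= g e + -1 * h e by rewrite mulN1r subr_ge0.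
have := st_flow_comb g_flow h_flow diff_ge0; rewrite mulN1r.
by apply: eq_st_flow => e; rewrite mulN1r.
Qed.

Lemma st_flow_sum N (A : finType) (S : {set A}) (f : A -> sp_edge N -> R) (r : A -> R) :
  (forall j, j \in S -> is_st_flow (f j) (r j)) ->
  is_st_flow (fun e => \sum_(j in S) f j e) (\sum_(j in S) r j).
Proof.
move=> f_flow; split=> [e|].
  by apply: sumr_ge0 => j jS; case: (f_flow j jS) => + _; apply.
split=> [x xs xt|]; rewrite net_out_sum.
  by apply: big1 => j jS; case: (f_flow j jS) => _ [+ _]; apply.
by apply: eq_bigr => j jS; case: (f_flow j jS) => _ [_ ->].
Qed.

Lemma st_flow_ge0 N (g : sp_edge N -> R) v : is_st_flow g v -> 0 <= v.
Proof.
elim: N g v => [|a IHa b IHb|a IHa b IHb] g v.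
- by move/st_flow_edge => [g_ge0 <-].
- by move/st_flow_ser => [/IHa].
- by move/st_flow_par => [v1 [v2 [/IHa v1_ge0 /IHb v2_ge0 ->]]]; apply: addr_ge0.
Qed.

(* This uses that series-parallel networks are acyclic. *)
Lemma st_flow_value0 N (g : sp_edge N -> R) : is_st_flow g 0 -> forall e, g e = 0.
Proof.
elim: N g => [|a IHa b IHb|a IHa b IHb] g.
- by move/st_flow_edge => [_ g0] [].
- by move/st_flow_ser => [/IHa ga0 /IHb gb0] [e|e]; [exact: ga0 | exact: gb0].
move/st_flow_par => [v1 [v2 [flow_a flow_b v12]]].
have v1_ge0 := st_flow_ge0 flow_a; have v2_ge0 := st_flow_ge0 flow_b.
have v1_0 : v1 = 0 by lra.
have v2_0 : v2 = 0 by lra.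
move: flow_a flow_b; rewrite v1_0 v2_0 => /IHa ga0 /IHb gb0 [e|e]; [exact: ga0 | exact: gb0].
Qed.

Lemma st_flow_nonzero N (g : sp_edge N -> R) v : is_st_flow g v -> v != 0 -> exists e, g e != 0.
Proof.
move=> [_ [_ <-]] out_s; apply/existsP; apply: contraNT out_s => /existsPn g0.
by rewrite /net_out !big1 ?subr0 // => e _; apply/eqP/negbNE/g0.
Qed.

Lemma eq_delay N (d g h : sp_edge N -> R) : g =1 h -> delay d g = delay d h.
Proof. by move=> gh; apply: eq_bigr => e _; rewrite gh. Qed.

Lemma delay0 N (d : sp_edge N -> R) : delay d (fun _ => 0) = 0.
Proof. by rewrite /delay big1 // => e _; rewrite mulr0. Qed.

Lemma delay_comb N (d g h : sp_edge N -> R) t :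
  delay d (fun e => g e + t * h e) = delay d g + t * delay d h.
Proof. by rewrite /delay mulr_sumr -big_split /=; apply: eq_bigr => e _; ring. Qed.

Lemma delay_sum N (A : finType) (S : {set A}) (d : sp_edge N -> R) (f : A -> sp_edge N -> R) :
  delay d (fun e => \sum_(j in S) f j e) = \sum_(j in S) delay d (f j).
Proof. by rewrite /delay exchange_big /=; apply: eq_bigr => e _; rewrite mulr_sumr. Qed.

Lemma delay_edge (d g : sp_edge SPEdge -> R) : delay d g = d tt * g tt.
Proof. by rewrite /delay (big_pred1 tt) // => -[]. Qed.

Lemma delay_ser a b (d g : sp_edge (SPSer a b) -> R) :
  delay d g = delay (lpart d) (lpart g) + delay (rpart d) (rpart g).
Proof. by rewrite /delay big_sumType. Qed.

Lemma delay_par a b (d g : sp_edge (SPPar a b) -> R) :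
  delay d g = delay (lpart d) (lpart g) + delay (rpart d) (rpart g).
Proof. by rewrite /delay big_sumType. Qed.

Lemma delay_glue_ser a b (d : sp_edge (SPSer a b) -> R) ga gb :
  delay d (glue ga gb) = delay (lpart d) ga + delay (rpart d) gb.
Proof. by rewrite /delay big_sumType. Qed.

Lemma delay_glue_par a b (d : sp_edge (SPPar a b) -> R) ga gb :
  delay d (glue ga gb) = delay (lpart d) ga + delay (rpart d) gb.
Proof. by rewrite /delay big_sumType. Qed.

(** * Cheapest augmenting paths and local optimality *)

(* Path costs take values in [option R]: [None] stands for +oo in a minimum
   (no path exists) and for -oo in a maximum. *)
Definition oadd (x y : option R) :=
  if x is Some p then (if y is Some q then Some (p + q) else None) else None.
Definition omin (x y : option R) :=
  if x is Some p then (if y is Some q then Some (Order.min p q) else x) else y.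
Definition omax (x y : option R) :=
  if x is Some p then (if y is Some q then Some (Order.max p q) else x) else y.
Definition oge (x : option R) (m : R) := if x is Some p then m <= p else true.
Definition ole (x : option R) (m : R) := if x is Some p then p <= m else true.
Definition oleo (x y : option R) :=
  if x is Some p then (if y is Some q then p <= q else true) else true.

Lemma oge_exists x : exists m, oge x m.
Proof. by case: x => [p|]; [exists p => /= | exists 0]. Qed.

Lemma ole_exists x : exists m, ole x m.
Proof. by case: x => [p|]; [exists p => /= | exists 0]. Qed.

Lemma oge_omin x y m : oge (omin x y) m = oge x m && oge y m.
Proof. by case: x => [p|]; case: y => [q|] //=; rewrite ?le_min ?andbT. Qed.

Lemma ole_omax x y m : ole (omax x y) m = ole x m && ole y m.
Proof. by case: x => [p|]; case: y => [q|] //=; rewrite ?ge_max ?andbT. Qed.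

Lemma oge_oadd x y p q : oge x p -> oge y q -> oge (oadd x y) (p + q).
Proof. by case: x => [?|]; case: y => [?|] //=; apply: lerD. Qed.

Lemma ole_oadd x y p q : ole x p -> ole y q -> ole (oadd x y) (p + q).
Proof. by case: x => [?|]; case: y => [?|] //=; apply: lerD. Qed.

Lemma oleo_between x y m : ole x m -> oge y m -> oleo x y.
Proof. by case: x => [?|]; case: y => [?|] //=; apply: le_trans. Qed.

Lemma oleo_ole x m : oleo x (Some m) -> ole x m.
Proof. by case: x. Qed.

Lemma oleo_oge x y m : oleo x (Some m) -> oge y m -> oleo x y.
Proof. by case: x => [?|]; case: y => [?|] //=; apply: le_trans. Qed.

Lemma oadd_Some x y m :
  oadd x y = Some m -> exists p q, [/\ x = Some p, y = Some q & m = p + q].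
Proof. by case: x => [p|] //; case: y => [q|] //= [<-]; exists p, q. Qed.

Lemma omax_Some x y m : omax x y = Some m -> x = Some m \/ y = Some m.
Proof.
case: x => [p|]; case: y => [q|] //= [<-]; [|by left|by right].
by case: leP; [right | left].
Qed.

Lemma bounded_slope (X Y t : R) : (forall m, X + m * t <= Y) -> t = 0.
Proof.
move=> bounded; apply/eqP; apply: contraT => t_neq0.
by have := bounded ((Y - X + 1) / t); rewrite divfK //; lra.
Qed.

Section SlopeBounds.
Variables (Xa Xb Ya Yb : R).

Lemma oadd_up fa fb t : 0 <= t ->
  (forall m, oge fa m -> Xa + m * t <= Ya) -> (forall m, oge fb m -> Xb + m * t <= Yb) ->
  forall m, oge (oadd fa fb) m -> Xa + Xb + m * t <= Ya + Yb.
Proof.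
move=> t_ge0 bnd_a bnd_b m.
case: fa bnd_a => [x|] bnd_a; last first.
  have t0 := bounded_slope (fun m => bnd_a m isT); have [p bp] := oge_exists fb.
  by have := bnd_a 0 isT; have := bnd_b p bp; rewrite t0 !mulr0; lra.
case: fb bnd_b => [y|] bnd_b /=; last first.
  have t0 := bounded_slope (fun m => bnd_b m isT).
  by have := bnd_a x (lexx x); have := bnd_b 0 isT; rewrite t0 !mulr0; lra.
move=> m_le; have := bnd_a x (lexx x); have := bnd_b y (lexx y).
have : 0 <= (x + y - m) * t by apply: mulr_ge0; lra.
lra.
Qed.

Lemma oadd_down ba bb t : t <= 0 ->
  (forall m, ole ba m -> Xa + m * t <= Ya) -> (forall m, ole bb m -> Xb + m * t <= Yb) ->
  forall m, ole (oadd ba bb) m -> Xa + Xb + m * t <= Ya + Yb.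
Proof.
move=> t_le0 bnd_a bnd_b m.
case: ba bnd_a => [x|] bnd_a; last first.
  have t0 := bounded_slope (fun m => bnd_a m isT); have [p bp] := ole_exists bb.
  by have := bnd_a 0 isT; have := bnd_b p bp; rewrite t0 !mulr0; lra.
case: bb bnd_b => [y|] bnd_b /=; last first.
  have t0 := bounded_slope (fun m => bnd_b m isT).
  by have := bnd_a x (lexx x); have := bnd_b 0 isT; rewrite t0 !mulr0; lra.
move=> le_m; have := bnd_a x (lexx x); have := bnd_b y (lexx y).
have : 0 <= (m - (x + y)) * - t by apply: mulr_ge0; lra.
lra.
Qed.

(* One part gains flow at marginal cost at least [fa], the other loses flow at
   marginal saving at most [bb <= fa]. *)
Lemma mixed_up fa bb ta tb m : 0 <= ta -> tb <= 0 -> 0 <= ta + tb -> oleo bb fa ->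
  (forall m, oge fa m -> Xa + m * ta <= Ya) -> (forall m, ole bb m -> Xb + m * tb <= Yb) ->
  oge fa m -> Xa + Xb + m * (ta + tb) <= Ya + Yb.
Proof.
move=> ta_ge0 tb_le0 t_ge0 bb_fa bnd_a bnd_b.
case: fa bb_fa bnd_a => [x|] bb_fa bnd_a /= m_le; last first.
  have ta0 := bounded_slope (fun m => bnd_a m isT); have [p bp] := ole_exists bb.
  have tb0 : tb = 0 by lra.
  by have := bnd_a 0 isT; have := bnd_b p bp; rewrite ta0 tb0 !mulr0; lra.
case: bb bb_fa bnd_b => [y|] /= y_le_x bnd_b; last first.
  have tb0 := bounded_slope (fun m => bnd_b m isT).
  by have := bnd_a m m_le; have := bnd_b 0 isT; rewrite tb0 !mulr0 addr0; lra.
have := bnd_a x (lexx x); have := bnd_b y (lexx y).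
have : 0 <= (x - m) * (ta + tb) by apply: mulr_ge0; lra.
have : 0 <= (x - y) * - tb by apply: mulr_ge0; lra.
lra.
Qed.

Lemma mixed_down ba fb ta tb m : ta <= 0 -> 0 <= tb -> ta + tb <= 0 -> oleo ba fb ->
  (forall m, ole ba m -> Xa + m * ta <= Ya) -> (forall m, oge fb m -> Xb + m * tb <= Yb) ->
  ole ba m -> Xa + Xb + m * (ta + tb) <= Ya + Yb.
Proof.
move=> ta_le0 tb_ge0 t_le0 ba_fb bnd_a bnd_b.
case: ba ba_fb bnd_a => [x|] ba_fb bnd_a /= le_m; last first.
  have ta0 := bounded_slope (fun m => bnd_a m isT); have [p bp] := oge_exists fb.
  have tb0 : tb = 0 by lra.
  by have := bnd_a 0 isT; have := bnd_b p bp; rewrite ta0 tb0 !mulr0; lra.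
case: fb ba_fb bnd_b => [y|] /= x_le_y bnd_b; last first.
  have tb0 := bounded_slope (fun m => bnd_b m isT).
  by have := bnd_a m le_m; have := bnd_b 0 isT; rewrite tb0 !mulr0 addr0; lra.
have := bnd_a x (lexx x); have := bnd_b y (lexx y).
have : 0 <= (m - x) * - (ta + tb) by apply: mulr_ge0; lra.
have : 0 <= (y - x) * tb by apply: mulr_ge0; lra.
lra.
Qed.

End SlopeBounds.

(* [fwd_cost c d F] is the cost of a cheapest s-t path of unsaturated edges (an
   augmenting path that uses no reverse edge), [bwd_cost d F] the cost of a
   costliest s-t path of edges carrying flow. *)
Fixpoint fwd_cost N : (sp_edge N -> R) -> (sp_edge N -> R) -> (sp_edge N -> R) -> option R :=
  match N with
  | SPEdge => fun c d F => if F tt < c tt then Some (d tt) else None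
  | SPSer a b => fun c d F =>
      oadd (fwd_cost (lpart c) (lpart d) (lpart F)) (fwd_cost (rpart c) (rpart d) (rpart F))
  | SPPar a b => fun c d F =>
      omin (fwd_cost (lpart c) (lpart d) (lpart F)) (fwd_cost (rpart c) (rpart d) (rpart F))
  end.

Fixpoint bwd_cost N : (sp_edge N -> R) -> (sp_edge N -> R) -> option R :=
  match N with
  | SPEdge => fun d F => if 0 < F tt then Some (d tt) else None
  | SPSer a b => fun d F => oadd (bwd_cost (lpart d) (lpart F)) (bwd_cost (rpart d) (rpart F))
  | SPPar a b => fun d F => omax (bwd_cost (lpart d) (lpart F)) (bwd_cost (rpart d) (rpart F))
  end.

Definition lcheaper (x y : option R) := if x is Some p then oge y p else false.

Lemma omin_Some x y m : omin x y = Some m ->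
  (lcheaper x y /\ x = Some m /\ oge y m) \/ (~~ lcheaper x y /\ y = Some m /\ oge x m).
Proof.
case: x => [p|]; case: y => [q|] //= [<-]; [|by left|by right].
case: (leP p q) => [pq | qp]; first by left; rewrite pq.
by right; rewrite ltW.
Qed.

Fixpoint cheapest_path N : (sp_edge N -> R) -> (sp_edge N -> R) -> (sp_edge N -> R) ->
    sp_edge N -> R :=
  match N with
  | SPEdge => fun c d F _ => 1
  | SPSer a b => fun c d F =>
      glue (cheapest_path (lpart c) (lpart d) (lpart F))
           (cheapest_path (rpart c) (rpart d) (rpart F))
  | SPPar a b => fun c d F =>
      if lcheaper (fwd_cost (lpart c) (lpart d) (lpart F)) (fwd_cost (rpart c) (rpart d) (rpart F))
      then glue (cheapest_path (lpart c) (lpart d) (lpart F)) (fun _ => 0)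
      else glue (fun _ => 0) (cheapest_path (rpart c) (rpart d) (rpart F))
  end.

(* No augmenting path through one branch of a parallel composition is cheaper
   than the most expensive flow-carrying path through the other branch. *)
Fixpoint sp_optimal N : (sp_edge N -> R) -> (sp_edge N -> R) -> (sp_edge N -> R) -> Prop :=
  match N with
  | SPEdge => fun c d F => True
  | SPSer a b => fun c d F =>
      sp_optimal (lpart c) (lpart d) (lpart F) /\ sp_optimal (rpart c) (rpart d) (rpart F)
  | SPPar a b => fun c d F =>
      [/\ sp_optimal (lpart c) (lpart d) (lpart F), sp_optimal (rpart c) (rpart d) (rpart F),
          oleo (bwd_cost (rpart d) (rpart F)) (fwd_cost (lpart c) (lpart d) (lpart F)) &
          oleo (bwd_cost (lpart d) (lpart F)) (fwd_cost (rpart c) (rpart d) (rpart F))]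
  end.

Definition up_bound N (c d F : sp_edge N -> R) v :=
  forall G u, is_st_flow G u -> (forall e, G e <= c e) -> v <= u ->
  forall m, oge (fwd_cost c d F) m -> delay d F + m * (u - v) <= delay d G.

Definition down_bound N (c d F : sp_edge N -> R) v :=
  forall G u, is_st_flow G u -> (forall e, G e <= c e) -> u <= v ->
  forall m, ole (bwd_cost d F) m -> delay d F + m * (u - v) <= delay d G.

Lemma edge_bounds (c d F : sp_edge SPEdge -> R) v :
  is_st_flow F v -> (forall e, F e <= c e) -> up_bound c d F v /\ down_bound c d F v.
Proof.
move=> /st_flow_edge [F_ge0 <-] Fc.
split=> G u /st_flow_edge [G_ge0 <-] Gc vu m /=; rewrite !delay_edge.
- case: ltP => [_ /= m_le | cF _].
    have : 0 <= (d tt - m) * (G tt - F tt) by apply: mulr_ge0; lra.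
    lra.
  have GF : G tt = F tt by have := Gc tt; lra.
  by rewrite GF subrr mulr0 addr0.
- case: ltP => [_ /= le_m | F_le0 _].
    have : 0 <= (m - d tt) * (F tt - G tt) by apply: mulr_ge0; lra.
    lra.
  have GF : G tt = F tt by lra.
  by rewrite GF subrr mulr0 addr0.
Qed.

Section CompositeBounds.
Variables (a b : sp).

Lemma ser_bounds (c d F : sp_edge (SPSer a b) -> R) v :
  up_bound (lpart c) (lpart d) (lpart F) v -> down_bound (lpart c) (lpart d) (lpart F) v ->
  up_bound (rpart c) (rpart d) (rpart F) v -> down_bound (rpart c) (rpart d) (rpart F) v ->
  up_bound c d F v /\ down_bound c d F v.
Proof.
move=> up_a down_a up_b down_b.
split=> G u /st_flow_ser [Ga Gb] Gc vu m; rewrite !delay_ser.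
- apply: oadd_up (up_a _ _ Ga (fun e => Gc (inl e)) vu) (up_b _ _ Gb (fun e => Gc (inr e)) vu) m.
  by rewrite subr_ge0.
- apply: oadd_down (down_a _ _ Ga (fun e => Gc (inl e)) vu)
    (down_b _ _ Gb (fun e => Gc (inr e)) vu) m.
  by rewrite subr_le0.
Qed.

Variables (c d F : sp_edge (SPPar a b) -> R) (v1 v2 : R).
Hypotheses (ba_fb : oleo (bwd_cost (lpart d) (lpart F)) (fwd_cost (rpart c) (rpart d) (rpart F)))
           (bb_fa : oleo (bwd_cost (rpart d) (rpart F)) (fwd_cost (lpart c) (lpart d) (lpart F)))
           (up_a : up_bound (lpart c) (lpart d) (lpart F) v1)
           (down_a : down_bound (lpart c) (lpart d) (lpart F) v1)
           (up_b : up_bound (rpart c) (rpart d) (rpart F) v2)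
           (down_b : down_bound (rpart c) (rpart d) (rpart F) v2).

Lemma par_up_bound : up_bound c d F (v1 + v2).
Proof.
move=> G u /st_flow_par [u1 [u2 [Ga Gb ->]]] Gc vu m /=.
rewrite oge_omin => /andP [ma mb].
have Gca : forall e, lpart G e <= lpart c e := fun e => Gc (inl e).
have Gcb : forall e, rpart G e <= rpart c e := fun e => Gc (inr e).
rewrite !delay_par (_ : u1 + u2 - (v1 + v2) = (u1 - v1) + (u2 - v2)); last by ring.
case: (leP v1 u1) => h1; case: (leP v2 u2) => h2.
- by have := up_a Ga Gca h1 ma; have := up_b Gb Gcb h2 mb; lra.
- by apply: (mixed_up _ _ _ bb_fa (up_a Ga Gca h1) (down_b Gb Gcb (ltW h2)) ma); lra.
- have tb_ge0 : 0 <= u2 - v2 by rewrite subr_ge0.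
  have ta_le0 : u1 - v1 <= 0 by rewrite subr_le0 ltW.
  have t_ge0 : 0 <= u2 - v2 + (u1 - v1) by lra.
  have := mixed_up tb_ge0 ta_le0 t_ge0 ba_fb (up_b Gb Gcb h2) (down_a Ga Gca (ltW h1)) mb.
  lra.
- lra.
Qed.

Lemma par_down_bound : down_bound c d F (v1 + v2).
Proof.
move=> G u /st_flow_par [u1 [u2 [Ga Gb ->]]] Gc uv m /=.
rewrite ole_omax => /andP [am bm].
have Gca : forall e, lpart G e <= lpart c e := fun e => Gc (inl e).
have Gcb : forall e, rpart G e <= rpart c e := fun e => Gc (inr e).
rewrite !delay_par (_ : u1 + u2 - (v1 + v2) = (u1 - v1) + (u2 - v2)); last by ring.
case: (leP u1 v1) => h1; case: (leP u2 v2) => h2.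
- by have := down_a Ga Gca h1 am; have := down_b Gb Gcb h2 bm; lra.
- by apply: (mixed_down _ _ _ ba_fb (down_a Ga Gca h1) (up_b Gb Gcb (ltW h2)) am); lra.
- have tb_le0 : u2 - v2 <= 0 by rewrite subr_le0.
  have ta_ge0 : 0 <= u1 - v1 by rewrite subr_ge0 ltW.
  have t_le0 : u2 - v2 + (u1 - v1) <= 0 by lra.
  have := mixed_down tb_le0 ta_ge0 t_le0 bb_fa (down_b Gb Gcb h2) (up_a Ga Gca (ltW h1)) bm.
  lra.
- lra.
Qed.

End CompositeBounds.

Lemma sp_optimal_bounds N (c d F : sp_edge N -> R) v :
  is_st_flow F v -> (forall e, F e <= c e) -> sp_optimal c d F ->
  up_bound c d F v /\ down_bound c d F v.
Proof.
elim: N c d F v => [|a IHa b IHb|a IHa b IHb] c d F v F_flow Fc.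
- by move=> _; apply: edge_bounds.
- move: F_flow => /st_flow_ser [Fa Fb] [opt_a opt_b].
  have [up_a down_a] := IHa _ _ _ _ Fa (fun e => Fc (inl e)) opt_a.
  have [up_b down_b] := IHb _ _ _ _ Fb (fun e => Fc (inr e)) opt_b.
  exact: ser_bounds.
- move: F_flow => /st_flow_par [v1 [v2 [Fa Fb ->]]] [opt_a opt_b bb_fa ba_fb].
  have [up_a down_a] := IHa _ _ _ _ Fa (fun e => Fc (inl e)) opt_a.
  have [up_b down_b] := IHb _ _ _ _ Fb (fun e => Fc (inr e)) opt_b.
  by split; [apply: par_up_bound | apply: par_down_bound].
Qed.

Lemma sp_optimal_min_cost N (c d F : sp_edge N -> R) v :
  is_st_flow F v -> (forall e, F e <= c e) -> sp_optimal c d F ->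
  forall G, is_st_flow G v -> (forall e, G e <= c e) -> delay d F <= delay d G.
Proof.
move=> F_flow Fc F_opt G G_flow Gc; have [up _] := sp_optimal_bounds F_flow Fc F_opt.
have [m m_le] := oge_exists (fwd_cost c d F).
by have := up G v G_flow Gc (lexx v) m m_le; rewrite subrr mulr0 addr0.
Qed.

(* The indicator of an s-t path inside [P], encoded as a 0/1-valued unit flow. *)
Definition unit_path N (P : sp_edge N -> Prop) (p : sp_edge N -> R) :=
  is_st_flow p 1 /\ forall e, p e = 0 \/ p e = 1 /\ P e.

Lemma unit_path_edge (P : sp_edge SPEdge -> Prop) : P tt -> unit_path P (fun _ => 1).
Proof. by move=> Ptt; split=> [|[]]; [apply/st_flow_edge; rewrite ler01 | right]. Qed.

Lemma unit_path_ser a b (P : sp_edge (SPSer a b) -> Prop) pa pb :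
  unit_path (fun e => P (inl e)) pa -> unit_path (fun e => P (inr e)) pb ->
  unit_path P (glue pa pb).
Proof.
move=> [fa sa] [fb sb].
by split=> [|[e|e]]; [apply/st_flow_ser | exact: sa | exact: sb].
Qed.

Lemma unit_path_par_l a b (P : sp_edge (SPPar a b) -> Prop) pa :
  unit_path (fun e => P (inl e)) pa -> unit_path P (glue pa (fun _ => 0)).
Proof.
move=> [fa sa]; split=> [|[e|e]]; [|exact: sa|by left].
by apply/st_flow_par; exists 1, 0; rewrite addr0; split=> //; apply: st_flow0.
Qed.

Lemma unit_path_par_r a b (P : sp_edge (SPPar a b) -> Prop) pb :
  unit_path (fun e => P (inr e)) pb -> unit_path P (glue (fun _ => 0) pb).
Proof.
move=> [fb sb]; split=> [|[e|e]]; [|by left|exact: sb].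
by apply/st_flow_par; exists 0, 1; rewrite add0r; split=> //; apply: st_flow0.
Qed.

Lemma cheapest_path_spec N (c d F : sp_edge N -> R) m : fwd_cost c d F = Some m ->
  unit_path (fun e => F e < c e) (cheapest_path c d F) /\ delay d (cheapest_path c d F) = m.
Proof.
elim: N c d F m => [|a IHa b IHb|a IHa b IHb] c d F m /=.
- case: ltP => // Fc [<-]; split; first exact: unit_path_edge.
  by rewrite delay_edge mulr1.
- move/oadd_Some=> [x [y [/IHa [pa da] /IHb [pb db] ->]]].
  by split; [apply: unit_path_ser | rewrite delay_glue_ser da db].
- move/omin_Some=> [[-> [/IHa [pa da] _]] | [/negbTE -> [/IHb [pb db] _]]].
  + by split; [apply: unit_path_par_l | rewrite delay_glue_par da delay0 addr0].
  + by split; [apply: unit_path_par_r | rewrite delay_glue_par db delay0 add0r].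
Qed.

Lemma costliest_path_spec N (d F : sp_edge N -> R) m : bwd_cost d F = Some m ->
  exists2 p, unit_path (fun e => 0 < F e) p & delay d p = m.
Proof.
elim: N d F m => [|a IHa b IHb|a IHa b IHb] d F m /=.
- case: ltP => // F_gt0 [<-]; exists (fun _ => 1); first exact: unit_path_edge.
  by rewrite delay_edge mulr1.
- move/oadd_Some=> [x [y [/IHa [pa pa_path da] /IHb [pb pb_path db] ->]]].
  by exists (glue pa pb); [apply: unit_path_ser | rewrite delay_glue_ser da db].
- move/omax_Some=> [/IHa [pa pa_path da] | /IHb [pb pb_path db]].
  + exists (glue pa (fun _ => 0)); first exact: unit_path_par_l.
    by rewrite delay_glue_par da delay0 addr0.
  + exists (glue (fun _ => 0) pb); first exact: unit_path_par_r.
    by rewrite delay_glue_par db delay0 add0r.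
Qed.

Lemma path_bottleneck N (P : sp_edge N -> Prop) (p s : sp_edge N -> R) :
  unit_path P p -> (forall e, P e -> 0 < s e) ->
  exists2 t, 0 < t & (forall e, p e = 1 -> t <= s e) /\ exists2 e, p e = 1 & s e = t.
Proof.
move=> [p_flow p01] s_pos.
have [e0 pe0] : exists e, p e == 1.
  have [e pe] := st_flow_nonzero p_flow (oner_neq0 R).
  by exists e; case: (p01 e) pe => [->|[-> _]]; rewrite ?eqxx.
case: (arg_minP s (P := [pred e | p e == 1]) pe0) => e /eqP pe s_min; exists (s e).
  by case: (p01 e) => [|[_ /s_pos]] //; rewrite pe => /eqP; rewrite oner_eq0.
by split=> [e' /eqP pe'|]; [exact: s_min | exists e].
Qed.

Lemma st_flow_push N (P : sp_edge N -> Prop) (p F : sp_edge N -> R) v t :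
  unit_path P p -> is_st_flow F v -> (forall e, p e = 1 -> 0 <= F e + t) ->
  is_st_flow (fun e => F e + t * p e) (v + t).
Proof.
move=> [p_flow p01] F_flow push_ge0.
have := st_flow_comb (t := t) F_flow p_flow; rewrite mulr1; apply=> e.
case: (p01 e) => [->|[pe _]]; last by rewrite pe mulr1 push_ge0.
by rewrite mulr0 addr0; case: F_flow => + _; apply.
Qed.

Lemma push_le_cap N (P : sp_edge N -> Prop) (p F c : sp_edge N -> R) t :
  unit_path P p -> (forall e, F e <= c e) -> (forall e, p e = 1 -> F e + t <= c e) ->
  forall e, F e + t * p e <= c e.
Proof.
move=> [_ p01] Fc push_le e.
by case: (p01 e) => [->|[pe _]]; rewrite ?mulr0 ?addr0 ?pe ?mulr1 ?push_le.
Qed.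

(* If the cheapest augmenting path of one part were cheaper than the costliest
   flow-carrying path of another part, shifting flow between them would pay. *)
Lemma parallel_exchange a b (ca da Fa : sp_edge a -> R) (cb db Fb : sp_edge b -> R) v1 v2 :
  is_st_flow Fa v1 -> is_st_flow Fb v2 -> (forall e, Fa e <= ca e) -> (forall e, Fb e <= cb e) ->
  (forall Ga Gb u1 u2, is_st_flow Ga u1 -> is_st_flow Gb u2 ->
     (forall e, Ga e <= ca e) -> (forall e, Gb e <= cb e) -> u1 + u2 = v1 + v2 ->
     delay da Fa + delay db Fb <= delay da Ga + delay db Gb) ->
  oleo (bwd_cost db Fb) (fwd_cost ca da Fa).
Proof.
move=> Fa_flow Fb_flow Fac Fbc F_min.
case Ea: (fwd_cost ca da Fa) => [x|]; case Eb: (bwd_cost db Fb) => [y|] //=.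
rewrite leNgt; apply/negP => xy.
have [pa_path pa_cost] := cheapest_path_spec Ea.
set pa := cheapest_path ca da Fa in pa_path pa_cost.
have [pb pb_path pb_cost] := costliest_path_spec Eb.
have slack_gt0 e : Fa e < ca e -> 0 < ca e - Fa e by rewrite subr_gt0.
have [ta ta_gt0 [ta_le _]] := path_bottleneck pa_path slack_gt0.
have [tb tb_gt0 [tb_le _]] := path_bottleneck (s := Fb) pb_path (fun e Fb_gt0 => Fb_gt0).
pose t := Order.min ta tb.
have t_gt0 : 0 < t by rewrite lt_min ta_gt0.
have t_le_ta : t <= ta by rewrite ge_min lexx.
have t_le_tb : t <= tb by rewrite ge_min lexx orbT.
have Ga_ge0 e : pa e = 1 -> 0 <= Fa e + t.
  by move=> _; case: Fa_flow => /(_ e) Fa_ge0 _; lra.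
have Gb_ge0 e : pb e = 1 -> 0 <= Fb e + - t by move=> /tb_le; lra.
have Gac e : pa e = 1 -> Fa e + t <= ca e by move=> /ta_le; lra.
have Gbc e : pb e = 1 -> Fb e + - t <= cb e by move=> _; have := Fbc e; lra.
have value : v1 + t + (v2 + - t) = v1 + v2 by ring.
have := F_min _ _ _ _ (st_flow_push pa_path Fa_flow Ga_ge0) (st_flow_push pb_path Fb_flow Gb_ge0)
  (push_le_cap pa_path Fac Gac) (push_le_cap pb_path Fbc Gbc) value.
rewrite !delay_comb pa_cost pb_cost.
have : 0 < t * (y - x) by rewrite mulr_gt0 // subr_gt0.
lra.
Qed.


Lemma min_cost_sp_optimal N (c d F : sp_edge N -> R) v :
  is_st_flow F v -> (forall e, F e <= c e) ->
  (forall G, is_st_flow G v -> (forall e, G e <= c e) -> delay d F <= delay d G) ->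
  sp_optimal c d F.
Proof.
elim: N c d F v => [|a IHa b IHb|a IHa b IHb] c d F v //.
- move=> /st_flow_ser [Fa Fb] Fc F_min; split.
  + apply: (IHa _ _ _ v Fa (fun e => Fc (inl e))) => Ga Ga_flow Gac.
    have : delay d F <= delay d (glue Ga (rpart F)).
      by apply: F_min; [apply/st_flow_ser | move=> [e|e]; [apply: Gac | apply: Fc]].
    by rewrite delay_ser delay_glue_ser; lra.
  + apply: (IHb _ _ _ v Fb (fun e => Fc (inr e))) => Gb Gb_flow Gbc.
    have : delay d F <= delay d (glue (lpart F) Gb).
      by apply: F_min; [apply/st_flow_ser | move=> [e|e]; [apply: Fc | apply: Gbc]].
    by rewrite delay_ser delay_glue_ser; lra.
move=> /st_flow_par [v1 [v2 [Fa Fb ->]]] Fc F_min.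
have F_min_parts Ga Gb u1 u2 : is_st_flow Ga u1 -> is_st_flow Gb u2 ->
    (forall e, Ga e <= lpart c e) -> (forall e, Gb e <= rpart c e) -> u1 + u2 = v1 + v2 ->
    delay (lpart d) (lpart F) + delay (rpart d) (rpart F) <=
    delay (lpart d) Ga + delay (rpart d) Gb.
  move=> Ga_flow Gb_flow Gac Gbc u12.
  rewrite -delay_par -delay_glue_par; apply: F_min; last by move=> [e|e]; [apply: Gac | apply: Gbc].
  by apply/st_flow_par; exists u1, u2.
split.
- apply: (IHa _ _ _ v1 Fa (fun e => Fc (inl e))) => Ga Ga_flow Gac.
  by have := F_min_parts _ _ _ _ Ga_flow Fb Gac (fun e => Fc (inr e)) erefl; lra.
- apply: (IHb _ _ _ v2 Fb (fun e => Fc (inr e))) => Gb Gb_flow Gbc.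
  by have := F_min_parts _ _ _ _ Fa Gb_flow (fun e => Fc (inl e)) Gbc erefl; lra.
- exact: parallel_exchange Fa Fb (fun e => Fc (inl e)) (fun e => Fc (inr e)) F_min_parts.
- apply: parallel_exchange Fb Fa (fun e => Fc (inr e)) (fun e => Fc (inl e)) _.
  move=> Gb Ga u2 u1 Gb_flow Ga_flow Gbc Gac u21.
  have u12 : u1 + u2 = v1 + v2 by rewrite addrC u21 addrC.
  by have := F_min_parts _ _ _ _ Ga_flow Gb_flow Gac Gbc u12; lra.
Qed.

(* The amount [t] is arbitrary: after augmenting, the cost [m] of the path still
   separates backward from forward costs, and this is all [sp_optimal] needs. *)
Lemma augment_sp_optimal N (c d F F' : sp_edge N -> R) m t :
  sp_optimal c d F -> fwd_cost c d F = Some m ->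
  (forall e, F' e = F e + t * cheapest_path c d F e) ->
  [/\ sp_optimal c d F', ole (bwd_cost d F') m & oge (fwd_cost c d F') m].
Proof.
elim: N c d F F' m => [|a IHa b IHb|a IHa b IHb] c d F F' m /=.
- by move=> _; case: ltP => // _ [<-] _; split=> //; case: ltP; rewrite /= ?lexx.
- move=> [opt_a opt_b] /oadd_Some [x [y [Ea Eb ->]]] F'_def.
  have [opt_a' ba' fa'] := IHa _ _ _ (lpart F') _ opt_a Ea (fun e => F'_def (inl e)).
  have [opt_b' bb' fb'] := IHb _ _ _ (rpart F') _ opt_b Eb (fun e => F'_def (inr e)).
  by split; [split | apply: ole_oadd | apply: oge_oadd].
move=> [opt_a opt_b bb_fa ba_fb] /omin_Some [[pick_a [Ea fb_ge]] | [pick_b [Eb fa_ge]]] F'_def.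
- have F'_a e : lpart F' e = lpart F e + t * cheapest_path (lpart c) (lpart d) (lpart F) e.
    by rewrite /lpart F'_def /= pick_a.
  have F'_b : rpart F' = rpart F.
    by apply: functional_extensionality => e; rewrite /rpart F'_def /= pick_a mulr0 addr0.
  have [opt_a' ba' fa'] := IHa _ _ _ (lpart F') _ opt_a Ea F'_a.
  rewrite Ea in bb_fa; rewrite F'_b ole_omax oge_omin ba' fa' fb_ge (oleo_ole bb_fa).
  by split=> //; split; [| | exact: oleo_oge bb_fa fa' | exact: oleo_between ba' fb_ge].
- have F'_b e : rpart F' e = rpart F e + t * cheapest_path (rpart c) (rpart d) (rpart F) e.
    by rewrite /rpart F'_def /= (negbTE pick_b).
  have F'_a : lpart F' = lpart F.
    apply: functional_extensionality => e.
    by rewrite /lpart F'_def /= (negbTE pick_b) mulr0 addr0.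
  have [opt_b' bb' fb'] := IHb _ _ _ (rpart F') _ opt_b Eb F'_b.
  rewrite Eb in ba_fb; rewrite F'_a ole_omax oge_omin bb' fb' fa_ge (oleo_ole ba_fb).
  by split=> //; split; [| | exact: oleo_between bb' fa_ge | exact: oleo_oge ba_fb fb'].
Qed.

Definition augment N (c d F : sp_edge N -> R) t := fun e => F e + t * cheapest_path c d F e.

Lemma augment_cheapest_path N (c d F : sp_edge N -> R) v m t :
  is_st_flow F v -> (forall e, F e <= c e) -> sp_optimal c d F -> fwd_cost c d F = Some m ->
  0 <= t -> (forall e, cheapest_path c d F e = 1 -> t <= c e - F e) ->
  [/\ is_st_flow (augment c d F t) (v + t), forall e, F e <= augment c d F t e,
      forall e, augment c d F t e <= c e & sp_optimal c d (augment c d F t)].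
Proof.
move=> F_flow Fc F_opt Em t_ge0 t_le.
have [[p_flow p01] _] := cheapest_path_spec Em.
have [F'_opt _ _] := augment_sp_optimal (t := t) F_opt Em (fun e => erefl).
have F_ge0 : forall e, 0 <= F e by case: F_flow.
split=> //.
- by apply: st_flow_push (conj p_flow p01) F_flow _ => e _; have := F_ge0 e; lra.
- by move=> e; rewrite /augment; case: (p01 e) => [->|[-> _]]; lra.
- by apply: push_le_cap (conj p_flow p01) Fc _ => e /t_le; lra.
Qed.

(* Augment by the bottleneck capacity or by the missing amount; every step of
   the first kind saturates an edge, which bounds the number of steps. *)
Lemma monotone_sp_optimal_flow N (c d G F : sp_edge N -> R) w v w' :
  is_st_flow G w -> (forall e, G e <= c e) ->
  is_st_flow F v -> (forall e, F e <= c e) -> sp_optimal c d F -> v <= w' -> w' <= w ->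
  exists F', [/\ is_st_flow F' w', forall e, F e <= F' e,
                forall e, F' e <= c e & sp_optimal c d F'].
Proof.
move=> G_flow Gc; have [k] := ubnP #|[pred e | F e < c e]|.
elim: k F v => // k IH F v card_lt F_flow Fc F_opt vw' w'w.
case: (leP w' v) => [w'v | v_lt_w'].
  have -> : w' = v by apply/le_anti; rewrite w'v vw'.
  by exists F; split=> // e; rewrite lexx.
have [m Em] : exists m, fwd_cost c d F = Some m.
  case Em: (fwd_cost c d F) => [m|]; first by exists m.
  have [up _] := sp_optimal_bounds F_flow Fc F_opt.
  have bound m := up G w G_flow Gc (le_trans vw' w'w) m.
  rewrite Em in bound; have := bounded_slope (fun m => bound m isT).
  by move/eqP; rewrite subr_eq0 => /eqP; lra.
have [p_path _] := cheapest_path_spec Em.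
have slack_gt0 e : F e < c e -> 0 < c e - F e by rewrite subr_gt0.
have [t t_gt0 [t_le [e0 pe0 te0]]] := path_bottleneck p_path slack_gt0.
case: (leP (w' - v) t) => [missing_le | t_lt].
  have [||F'_flow FF' F'c F'_opt] := augment_cheapest_path F_flow Fc F_opt Em (t := w' - v).
  - by rewrite subr_ge0 ltW.
  - by move=> e /t_le; lra.
  by exists (augment c d F (w' - v)); split=> //; rewrite addrCA subrr addr0 in F'_flow.
have [||F1_flow FF1 F1c F1_opt] := augment_cheapest_path F_flow Fc F_opt Em (t := t).
- exact: ltW.
- exact: t_le.
have card_F1 : (#|[pred e | (augment c d F t e < c e)%R]| < k)%N.
  rewrite -ltnS; apply: leq_trans card_lt; rewrite ltnS.
  apply: proper_card; apply/properP; split.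
    by apply/subsetP => e; rewrite !inE /= => F1_lt; apply: le_lt_trans F1_lt.
  exists e0; rewrite !inE /=; last by rewrite /augment pe0 mulr1 -te0 addrC subrK ltxx.
  by rewrite -subr_gt0 te0.
have [||F' [F'_flow F1F' F'c F'_opt]] := IH _ _ card_F1 F1_flow F1c F1_opt.
- by rewrite ltW // -ltrBrDl.
- exact: w'w.
by exists F'; split=> // e; apply: le_trans (FF1 e) (F1F' e).
Qed.

End SeriesParallelFlows.

(** * Extensibility *)

Section Extensibility.
Variables (R : realFieldType) (N : sp) (A : finType).
Variables (c d : sp_edge N -> R) (r : A -> R).

Lemma jointly_optimal_aggregate (T : {set A}) g : feasible_for c r T g ->
  (forall G, is_st_flow G (\sum_(j in T) r j) -> (forall e, G e <= c e) ->
     delay d (fun e => \sum_(j in T) g j e) <= delay d G) ->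
  jointly_optimal c d r T g.
Proof.
move=> g_feasible agg_min; split=> // h [h_flow h_cap].
by rewrite -!delay_sum; apply: agg_min (st_flow_sum h_flow) h_cap.
Qed.

Lemma aggregate_min_cost (S : {set A}) f :
  (forall j, 0 <= r j) -> jointly_optimal c d r S f ->
  forall G, is_st_flow G (\sum_(j in S) r j) -> (forall e, G e <= c e) ->
  delay d (fun e => \sum_(j in S) f j e) <= delay d G.
Proof.
move=> r_ge0 [[f_flow f_cap] f_opt] G G_flow Gc.
have F_flow := st_flow_sum f_flow.
set v := \sum_(j in S) r j in G_flow F_flow.
have [v0 | v_neq0] := eqVneq v 0.
  rewrite v0 in G_flow F_flow.
  by rewrite (eq_delay _ (st_flow_value0 F_flow)) (eq_delay _ (st_flow_value0 G_flow)).
pose g j e := r j / v * G e.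
have g_sum e : \sum_(j in S) g j e = G e by rewrite -!mulr_suml -/v divff // mul1r.
rewrite delay_sum -(eq_delay _ g_sum) delay_sum; apply: f_opt; split=> [j _|e]; last first.
  by rewrite g_sum.
rewrite -[r j](divfK v_neq0); apply: st_flow_scale G_flow _.
by rewrite divr_ge0 //; apply: sumr_ge0.
Qed.

End Extensibility.

Theorem lemmaD3 (R : realFieldType) (N : sp) (A : finType)
    (c d : sp_edge N -> R) (r : A -> R)
    (hc : forall e, 0 < c e) (hd : forall e, 0 <= d e)
    (hr : forall i, 0 <= r i)
    (hmax : exists (v : R) (g : sp_edge N -> R),
        is_st_flow g v /\ (forall e, g e <= c e) /\ \sum_i r i <= v) :
  extensibility c d r.
Proof.
move=> S f i f_opt iS.
have [w [G [G_flow [Gc sum_r_le]]]] := hmax.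
have [[f_flow f_cap] _] := f_opt.
pose F e := \sum_(j in S) f j e; pose v := \sum_(j in S) r j.
have F_flow : is_st_flow F v := st_flow_sum f_flow.
have F_opt := min_cost_sp_optimal F_flow f_cap (aggregate_min_cost hr f_opt).
have v_le : v + r i <= w.
  apply: le_trans sum_r_le; rewrite (bigID (fun j => j \in i |: S)) /= big_setU1 //= -/v.
  have : 0 <= \sum_(j | j \notin i |: S) r j by apply: sumr_ge0.
  lra.
have v_le_vr : v <= v + r i by rewrite lerDl.
have [F' [F'_flow FF' F'c F'_opt]] :=
  monotone_sp_optimal_flow G_flow Gc F_flow f_cap F_opt v_le_vr v_le.
pose g j := if j == i then (fun e => F' e - F e) else f j.
have g_S j : j \in S -> g j = f j.
  by move=> jS; rewrite /g; case: eqP => // ji; rewrite -ji jS in iS.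
have g_sum e : \sum_(j in i |: S) g j e = F' e.
  by rewrite big_setU1 //= {1}/g eqxx (eq_bigr (fun j => f j e)) ?subrK // => j /g_S ->.
exists g; split=> [|j /g_S -> //]; apply: jointly_optimal_aggregate.
  split=> [j|e]; last by rewrite g_sum.
  rewrite in_setU1 => /orP [/eqP -> | jS]; last by rewrite g_S //; apply: f_flow.
  have -> : r i = v + r i - v by rewrite addrAC subrr add0r.
  by rewrite /g eqxx; apply: st_flow_sub.
move=> H H_flow Hc; rewrite (eq_delay _ g_sum).
rewrite big_setU1 //= addrC in H_flow.
exact: (sp_optimal_min_cost F'_flow F'c F'_opt H_flow Hc).
Qed.
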